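(* Let $\ell,m,n$ be positive integers with $\ell<n$, $m<n$, $\gcd(m,n)=1$. Then $\ell^+$ equals the number of $L$'s in $\hat{\mathcal{X}}$, $\ell^-$ equals the number of $L$'s in $\hat{\mathcal{Y}}$, and $\ell^++\ell^-=\ell$.
   Context: $\mathcal{S}=\mathcal{F}[\ell,m,n]$ is the $n$-periodic sequence with $\mathcal{S}_i=L$ if $im\bmod n<\ell$ and $R$ otherwise. $d\in\{1,\dots,n-1\}$ is the inverse of $m$ mod $n$. $\hat{\mathcal{X}}=\mathcal{S}_0\cdots\mathcal{S}_{n-d-1}$ and $\hat{\mathcal{Y}}=\mathcal{S}_{n-d}\cdots\mathcal{S}_{n-1}$. The left and right Farey roots of $\frac mn$ are the fractions $\frac{m^-}{n^-}<\frac{m^+}{n^+}$ with $m^\pm\ge0$, $n^\pm\ge1$, $m^-+m^+=m$, $n^-+n^+=n$, $m^+n^--m^-n^+=1$; $\ell^+=\lceil\ell n^+/n\rceil$ and $\ell^-=\lfloor\ell n^-/n\rfloor$. *)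

From mathcomp Require Import all_boot.
Set Implicit Arguments. Unset Strict Implicit. Unset Printing Implicit Defensive.

Inductive letter := L | R.

Definition is_L (c : letter) : bool := if c is L then true else false.

Definition F (l m n : nat) (i : nat) : letter :=
  if (i * m) %% n < l then L else R.

Definition Xhat (l m n d : nat) : seq letter :=
  [seq F l m n i | i <- iota 0 (n - d)].
Definition Yhat (l m n d : nat) : seq letter :=
  [seq F l m n i | i <- iota (n - d) d].

Definition countL (w : seq letter) : nat := count is_L w.

Definition ceil_div (a b : nat) : nat := (a + b - 1) %/ b.

(* (mm, nm) / (mp, np) are the left and right Farey roots of m/n:
   m^-/n^- < m^+/n^+, m^pm >= 0, n^pm >= 1, m^- + m^+ = m, n^- + n^+ = n,
   m^+ n^- - m^- n^+ = 1. *)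
Definition farey_roots (m n mm nm mp np : nat) : Prop :=
  [/\ 1 <= nm, 1 <= np, mm * np < mp * nm, mm + mp = m &
      nm + np = n /\ mp * nm = mm * np + 1].

From mathcomp Require Import all_boot.
From mathcomp Require Import zify.

Set Implicit Arguments.
Unset Strict Implicit.
Unset Printing Implicit Defensive.

(** The Farey relation [n m^+ = m n^+ + 1] gives [i m mod n = floor (n k / n^+)]
    with [k = i m^+ mod n^+] for [i < n^+]. As [n] is a unit mod [n^+],
    [i |-> i m^+ mod n^+] permutes [[0, n^+)], so the residues [i m mod n],
    [i < n^+], are the values [floor (n k / n^+)], [k < n^+], and exactly
    [ceil (l n^+ / n)] of them lie below [l]. Since [d m = 1] and
    [n^+ m = -1] mod [n], coprimality forces [n^+ + d = n]: [Xhat] is the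
    first [n^+] letters of a period, which contains [l] letters [L] in all,
    and [floor (l n^- / n) = l - ceil (l n^+ / n)]. *)

Lemma count_ltn_iota c k : count (ltn^~ c) (iota 0 k) = minn c k.
Proof.
elim: k => [|k IHk]; first by rewrite minn0.
by rewrite -addn1 iotaD count_cat IHk /= add0n; case: ltnP; lia.
Qed.

Lemma ltn_ceil_div k a b : 0 < b -> (k < ceil_div a b) = (k * b < a).
Proof. by move=> b0; rewrite /ceil_div -[k < _]/(k.+1 <= _) leq_divRL //; lia. Qed.

Lemma ceil_div_mulnBr l b n : 0 < n -> ceil_div (l * n - b) n = l - b %/ n.
Proof.
move=> n0.
have lt_iff k : (k < ceil_div (l * n - b) n) = (k < l - b %/ n).
  rewrite ltn_ceil_div // ltn_subRL [RHS]ltn_subRL (addnC (b %/ n)) -(ltn_subRL k).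
  by rewrite ltn_divLR // mulnBl ltn_subRL addnC.
apply/anti_leq/andP; split; rewrite leqNgt.
  by rewrite lt_iff ltnn.
by rewrite -lt_iff ltnn.
Qed.

Section MulUnitMod.

Variables (N a b : nat).
Hypothesis ba1 : b * a = 1 %[mod N].

Lemma perm_iota_mulmod : perm_eq [seq i * a %% N | i <- iota 0 N] (iota 0 N).
Proof.
have uniq_img : uniq [seq i * a %% N | i <- iota 0 N].
  rewrite map_inj_in_uniq ?iota_uniq // => i j.
  rewrite !mem_iota !add0n => /andP[_ iN] /andP[_ jN] eq_ij.
  have : i * a * b = j * a * b %[mod N] by rewrite -modnMml eq_ij modnMml.
  rewrite -!mulnA (mulnC a b) -modnMmr ba1 modnMmr -[in RHS]modnMmr ba1.
  by rewrite modnMmr !muln1 !modn_small.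
have sub_img : {subset [seq i * a %% N | i <- iota 0 N] <= iota 0 N}.
  move=> x /mapP[i]; rewrite !mem_iota !add0n => /andP[_ iN] ->.
  by rewrite ltn_mod; case: N iN.
apply: uniq_perm => //; first exact: iota_uniq.
by case: (uniq_min_size uniq_img sub_img); rewrite size_map.
Qed.

Lemma count_iota_mulmod (P : pred nat) :
  count (fun i => P (i * a %% N)) (iota 0 N) = count P (iota 0 N).
Proof. by rewrite -(permP perm_iota_mulmod P) count_map. Qed.

End MulUnitMod.

Lemma farey_det m n mm nm mp np :
  farey_roots m n mm nm mp np -> n * mp = m * np + 1.
Proof.
move=> [_ _ _ <- [<- det]].
by rewrite mulnDl mulnC det mulnDl [mp * np]mulnC addnAC.
Qed.

Section FareyResidues.

Variables (l m n mp np : nat).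
Hypotheses (np_gt0 : 0 < np) (np_le_n : np <= n) (l_le_n : l <= n).
Hypothesis det : n * mp = m * np + 1.

Let n_gt0 : 0 < n. Proof. exact: leq_trans np_le_n. Qed.

Lemma modn_mul_farey i : i < np -> i * m %% n = n * (i * mp %% np) %/ np.
Proof.
move=> i_lt_np.
have n_mod : n * (i * mp %% np) = (i * m %% n) * np + i.
  rewrite muln_modr mulnCA det mulnDr muln1 mulnA -modnDml -muln_modl.
  rewrite modn_small // (leq_trans (_ : _ < i * m %% n * np + np)) ?ltn_add2l //.
  by rewrite -mulSnr leq_mul2r ltn_mod n_gt0 orbT.
by rewrite n_mod divnMDl // divn_small // addn0.
Qed.

Lemma count_residues_farey :
  count (fun i => i * m %% n < l) (iota 0 np) = ceil_div (l * np) n.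
Proof.
have unit_n : n * mp = 1 %[mod np] by rewrite det -modnDml modnMl.
rewrite (eq_in_count (a2 := fun i => n * (i * mp %% np) %/ np < l)); last first.
  by move=> i; rewrite mem_iota add0n => /andP[_ /modn_mul_farey ->].
rewrite (count_iota_mulmod unit_n (fun k => n * k %/ np < l)).
rewrite (eq_count (a2 := ltn^~ (ceil_div (l * np) n))); last first.
  by move=> k /=; rewrite ltn_divLR // ltn_ceil_div // mulnC.
rewrite count_ltn_iota; apply/minn_idPl.
by rewrite leqNgt ltn_ceil_div // mulnC -leqNgt leq_mul2r l_le_n orbT.
Qed.

End FareyResidues.

Lemma count_residues_period l m n d : d * m = 1 %[mod n] -> l <= n ->
  count (fun i => i * m %% n < l) (iota 0 n) = l.
Proof.
move=> dm1 l_le_n.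
by rewrite (count_iota_mulmod dm1 (ltn^~ l)) count_ltn_iota; lia.
Qed.

Lemma farey_inverse m n d np mp : coprime m n -> d * m = 1 %[mod n] ->
  n * mp = m * np + 1 -> 0 < np < n -> 0 < d < n -> np + d = n.
Proof.
move=> co_mn dm1 det /andP[np0 np_lt] /andP[d0 d_lt].
have : (np + d) * m + 1 = 0 + 1 %[mod n].
  by rewrite mulnDl [np * m]mulnC addnAC -det -modnDmr dm1 modnDmr mulnC modnMDl.
move/eqP; rewrite eqn_modDr mod0n -/(dvdn n _).
rewrite Gauss_dvdl 1?coprime_sym // => /dvdnP[[|[|k]] hk]; lia.
Qed.

Lemma countL_map_F l m n s :
  countL [seq F l m n i | i <- s] = count (fun i => i * m %% n < l) s.
Proof. by rewrite /countL count_map; apply: eq_count => i; rewrite /F /=; case: ifP. Qed.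

Theorem lemma3p7 (l m n d mm nm mp np : nat) :
  0 < l -> 0 < m -> l < n -> m < n -> coprime m n ->
  1 <= d <= n - 1 -> d * m = 1 %[mod n] ->
  farey_roots m n mm nm mp np ->
  let lplus := ceil_div (l * np) n in
  let lminus := (l * nm) %/ n in
  [/\ lplus = countL (Xhat l m n d),
      lminus = countL (Yhat l m n d) &
      lplus + lminus = l].
Proof.
move=> _ _ l_lt_n _ co_mn d_range dm1 roots lplus lminus.
have [nm_ge1 np_ge1 _ _ [nm_np _]] := roots.
have det := farey_det roots.
have np_d : np + d = n by apply: (farey_inverse co_mn dm1 det); lia.
have countX : countL (Xhat l m n d) = lplus.
  rewrite countL_map_F (_ : n - d = np); last lia.
  by apply: count_residues_farey det; lia.
have countXY : countL (Xhat l m n d) + countL (Yhat l m n d) = l.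
  rewrite !countL_map_F -count_cat -iotaD subnK; last lia.
  by apply: count_residues_period dm1 _; lia.
have sum_l : lplus + lminus = l.
  rewrite /lplus /lminus (_ : l * np = l * n - l * nm).
    rewrite ceil_div_mulnBr ?subnK //; last lia.
    by rewrite -ltnS ltn_divLR //; nia.
  by rewrite -nm_np mulnDr addKn.
by split; lia.
Qed.
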